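(* Let $\Phi=\forall u_1\ldots\forall u_n\exists e_1(D_1)\ldots\exists e_m(D_m).\varphi$ be a DQBF with prefix $\mathcal{Q}$, let $A$ be a set of arbiter variables with arbiter clauses $\varphi_A$, and let $\Phi'=\mathcal{Q}\exists A(\emptyset).\varphi\wedge\varphi_A$. Then $\Phi$ is true if and only if $\Phi'$ is true.
   Context: For a set $V$ of variables, $[V]$ is the set of assignments $V\to\{\textsc{true},\textsc{false}\}$; assignments are identified with terms of the literals they make true, $\neg\sigma$ is the clause of the negations of these literals, and $\sigma|_W$ denotes restriction. A DQBF is $\forall u_1\ldots\forall u_n\exists e_1(D_1)\ldots\exists e_m(D_m).\varphi$ with pairwise distinct variables, $U=\{u_i\}$, $E=\{e_j\}$, dependency sets $D(e_j)=D_j\subseteq U$, and $\varphi$ a CNF over $U\cup E$; a model is a family $F=(F_e)_{e}$ with $F_e:[D(e)]\to\{\textsc{true},\textsc{false}\}$ such that for every $\sigma\in[U]$, $\sigma\cup F(\sigma)$ satisfies the matrix, where $F(\sigma)$ assigns each existential $e$ the value $F_e(\sigma|_{D(e)})$; the DQBF is true iff it has a model. Arbiter variables: for $e\in E$, $\sigma\in[D(e)]$, $e^\sigma$ is a fresh variable; for a set $A$ of them, $\varphi_A=\bigwedge_{e^\sigma\in A}\big((e^\sigma\vee\neg\sigma\vee\neg e)\wedge(\neg e^\sigma\vee\neg\sigma\vee e)\big)$. For a CNF $\psi$, $\mathcal{Q}\exists A(\emptyset).\psi$ is the DQBF whose prefix is that of $\Phi$ extended by every variable of $A$ as an existential variable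 with empty dependency set, and whose matrix is $\psi$. *)

From mathcomp Require Import all_boot.
Set Implicit Arguments.
Unset Strict Implicit.
Unset Printing Implicit Defensive.

(* A literal over variables V is a pair (v, b); it is satisfied by an
   assignment a iff a v = b.  So (v, true) is the positive literal v and
   (v, false) is the negative literal ~v. *)
Definition lit (V : Type) := (V * bool)%type.
Definition clause (V : Type) := seq (lit V).
Definition cnf (V : Type) := seq (clause V).

Definition lit_sat (V : Type) (a : V -> bool) (l : lit V) : bool := a l.1 == l.2.
Definition clause_sat (V : Type) (a : V -> bool) (c : clause V) : bool :=
  has (lit_sat a) c.
Definition cnf_sat (V : Type) (a : V -> bool) (f : cnf V) : bool :=
  all (clause_sat a) f.

(* A DQBF  forall U  exists x (dep x) ...  . matrix,
   with universal variables U, existential variables X (disjoint, as the sum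
   type U + X enforces), dependency sets dep x \subset U and a CNF matrix over
   U + X. *)
Record dqbf (U X : finType) := DQBF {
  dep : X -> {set U};
  matrix : cnf (U + X)
}.

Definition assign (U : finType) (D : {set U}) :=
  {ffun {u : U | u \in D} -> bool}.

Definition restrict (U : finType) (s : U -> bool) (D : {set U}) : assign D :=
  [ffun x => s (val x)].

Definition ext_assign (U X : finType) (Phi : dqbf U X)
  (F : forall x : X, assign (dep Phi x) -> bool) (s : U -> bool) : U + X -> bool :=
  fun v => match v with
           | inl u => s u
           | inr x => F x (restrict s (dep Phi x))
           end.

Definition is_model (U X : finType) (Phi : dqbf U X)
  (F : forall x : X, assign (dep Phi x) -> bool) : Prop :=
  forall s : U -> bool, cnf_sat (@ext_assign U X Phi F s) (matrix Phi).

Definition dqbf_true (U X : finType) (Phi : dqbf U X) : Prop :=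
  exists F : (forall x : X, assign (dep Phi x) -> bool), @is_model U X Phi F.

(* arbiter variables e^sigma, for e in X and sigma in [D(e)] *)
Definition arb (U X : finType) (Phi : dqbf U X) : finType :=
  {e : X & assign (dep Phi e)}.

Section Arbiter.
Variables (U X : finType) (Phi : dqbf U X) (A : {set arb Phi}).

Definition Xext : finType := (X + {a : arb Phi | a \in A})%type.

Definition lift_var (v : U + X) : U + Xext :=
  match v with inl u => inl u | inr x => inr (inl x) end.

Definition neg_assign (e : X) (s : assign (dep Phi e)) : clause (U + Xext) :=
  [seq (inl (val u), ~~ s u) | u : {u : U | u \in dep Phi e}].

(* (e^s \/ ~s \/ ~e) /\ (~e^s \/ ~s \/ e) *)
Definition arb_clauses (a : {a : arb Phi | a \in A}) : cnf (U + Xext) :=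
  [:: (inr (inr a), true) :: (inr (inl (tag (val a))), false)
        :: neg_assign (tagged (val a));
      (inr (inr a), false) :: (inr (inl (tag (val a))), true)
        :: neg_assign (tagged (val a))].

Definition phiA : cnf (U + Xext) :=
  flatten [seq arb_clauses a | a : {a : arb Phi | a \in A}].

Definition dep_ext (x : Xext) : {set U} :=
  match x with inl x => dep Phi x | inr _ => set0 end.

Definition arbiter_ext : dqbf U Xext :=
  DQBF dep_ext (map (map (fun l => (lift_var l.1, l.2))) (matrix Phi) ++ phiA).

End Arbiter.

From mathcomp Require Import all_boot.

Set Implicit Arguments.
Unset Strict Implicit.
Unset Printing Implicit Defensive.

(* The arbiter clauses only say that e^sigma and e agree on the universal
   assignments extending sigma.  A model F of Phi thus extends to a model of
   Phi' by the constant Skolem functions e^sigma := F_e(sigma); conversely a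
   model of Phi' restricted to the original existentials is a model of Phi,
   because the matrix of Phi' contains that of Phi. *)

Lemma eq_cnf_sat (V : Type) (a b : V -> bool) (f : cnf V) :
  a =1 b -> cnf_sat a f = cnf_sat b f.
Proof. by move=> eq_ab; apply: eq_all => c; apply: eq_has => l; rewrite /lit_sat eq_ab. Qed.

Lemma cnf_sat_rename (V W : Type) (r : V -> W) (a : W -> bool) (f : cnf V) :
  cnf_sat a (map (map (fun l => (r l.1, l.2))) f) = cnf_sat (a \o r) f.
Proof. by rewrite /cnf_sat all_map; apply: eq_all => c; rewrite /= /clause_sat has_map. Qed.

Section ArbiterExtension.
Variables (U X : finType) (Phi : dqbf U X) (A : {set arb Phi}).

Local Notation arbA := {b : arb Phi | b \in A}.
Local Notation var' := (U + Xext A)%type.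

Lemma cnf_sat_arbiter_ext (a : var' -> bool) :
  cnf_sat a (matrix (arbiter_ext A))
  = cnf_sat (a \o lift_var A) (matrix Phi) && cnf_sat a (phiA A).
Proof. by rewrite /cnf_sat all_cat -/(cnf_sat _ _) cnf_sat_rename. Qed.

Lemma neg_assign_sat (a : var' -> bool) (e : X) (sigma : assign (dep Phi e)) :
  restrict (a \o inl) (dep Phi e) != sigma -> clause_sat a (neg_assign A sigma).
Proof.
move=> /eqP neq_sigma; rewrite /clause_sat /neg_assign has_map.
have [u a_u] : exists u, a (inl (val u)) != sigma u.
  apply/existsP; apply: contra_notT neq_sigma; rewrite negb_exists => /forallP eq_u.
  by apply/ffunP => u; rewrite ffunE; apply/eqP; rewrite -[_ == _]negbK eq_u.
by apply/hasP; exists u; rewrite ?mem_enum // /lit_sat /=; case: (a _) a_u; case: (sigma u).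
Qed.

Lemma phiA_sat (a : var' -> bool) :
  (forall b : arbA, restrict (a \o inl) (dep Phi (tag (val b))) = tagged (val b) ->
     a (inr (inr b)) = a (inr (inl (tag (val b))))) ->
  cnf_sat a (phiA A).
Proof.
move=> arb_agree; apply/allP => c /flatten_mapP [b _].
have [/arb_agree eq_b | neq_b] := eqVneq (restrict (a \o inl) _) (tagged (val b)).
  by rewrite !inE => /orP [] /eqP -> /=; rewrite /lit_sat /= eq_b; case: (a _).
have sat_neg := neg_assign_sat neq_b.
by rewrite !inE => /orP [] /eqP -> /=; rewrite sat_neg !orbT.
Qed.

Lemma ext_assign_lift (F' : forall x : Xext A, assign (dep (arbiter_ext A) x) -> bool)
    (s : U -> bool) :
  ext_assign F' s \o lift_var A =1 ext_assign (fun e => F' (inl e)) s.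
Proof. by case. Qed.

Definition arbiter_model (F : forall e : X, assign (dep Phi e) -> bool) :
    forall x : Xext A, assign (dep (arbiter_ext A) x) -> bool :=
  fun x => match x with
           | inl e => F e
           | inr b => fun _ => F (tag (val b)) (tagged (val b))
           end.

Lemma arbiter_model_is_model (F : forall e : X, assign (dep Phi e) -> bool) :
  is_model F -> is_model (arbiter_model F).
Proof.
move=> F_model s; rewrite cnf_sat_arbiter_ext (eq_cnf_sat _ (ext_assign_lift _ s)).
by rewrite F_model; apply: phiA_sat => b /= ->.
Qed.

Lemma arbiter_ext_model_restrict (F' : forall x : Xext A, assign (dep (arbiter_ext A) x) -> bool) :
  is_model F' -> is_model (fun e => F' (inl e)).
Proof.
move=> F'_model s; have /[!cnf_sat_arbiter_ext] /andP [] := F'_model s.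
by rewrite (eq_cnf_sat _ (ext_assign_lift _ s)).
Qed.

End ArbiterExtension.

Theorem lemma10 (U X : finType) (Phi : dqbf U X) (A : {set arb Phi}) :
  dqbf_true Phi <-> dqbf_true (arbiter_ext A).
Proof.
split=> [[F F_model] | [F' F'_model]].
- by exists (arbiter_model F); apply: arbiter_model_is_model.
- by exists (fun e => F' (inl e)); apply: arbiter_ext_model_restrict.
Qed.
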